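(* Let $\{\rho_n\},\{\tilde\rho_n\}\subset[-1,1]$ satisfy $\rho_n\to1$, $\tilde\rho_n\to1$ and $1-\tilde\rho_n=\Theta(1-\rho_n)$. Then for all sufficiently large $n$ there exist $\mathbf{x}_1,\mathbf{x}_2\in\mathbb{R}^n$ with $\|\mathbf{x}_1\|_2^2=nS_1$, $\|\mathbf{x}_2\|_2^2=nS_2$, $\frac{\langle\mathbf{x}_1,\mathbf{x}_2\rangle}{\|\mathbf{x}_1\|_2\|\mathbf{x}_2\|_2}=\tilde\rho_n$, such that $$\tilde T_{1,n}:=\sum_{i=1}^n\mathbb{E}\Big[\Big|\tfrac{1}{\sqrt n}\big(j_1(x_{1i},x_{2i},Y_i)-\mathbb{E}[j_1(x_{1i},x_{2i},Y_i)]\big)\Big|^3\Big]=O\Big(\frac{1-\tilde\rho_n}{\sqrt n}\Big),$$ where $Y_i=x_{1i}+x_{2i}+Z_i$ with $Z_i$ i.i.d. $\mathcal{N}(0,1)$ and $j_1$ is the information density defined with parameter $\rho=\rho_n$.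
   Context: $S_1,S_2>0$ fixed; logarithms natural. $W(y|x_1,x_2)=\frac{1}{\sqrt{2\pi}}\exp(-\frac12(y-x_1-x_2)^2)$. For a parameter $\rho\in[-1,1]$: $Q_{Y|X_2}(y|x_2):=\mathcal{N}(y;x_2(1+\rho\sqrt{S_1/S_2}),1+S_1(1-\rho^2))$ and $j_1(x_1,x_2,y):=\log\frac{W(y|x_1,x_2)}{Q_{Y|X_2}(y|x_2)}$. *)

From Stdlib Require Import Reals Lra Classical ClassicalEpsilon.
Open Scope R_scope.

Fixpoint rsum (n : nat) (f : nat -> R) : R :=
  match n with O => 0 | S k => rsum k f + f k end.

(* vectors in R^n are represented by x : nat -> R, coordinates 0..n-1 *)
Definition inner (n : nat) (x y : nat -> R) : R := rsum n (fun i => x i * y i).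
Definition norm2 (n : nat) (x : nat -> R) : R := sqrt (inner n x x).

Definition normal_pdf (m v y : R) : R :=
  / sqrt (2 * PI * v) * exp (- (y - m) ^ 2 / (2 * v)).

Definition std_normal_pdf (z : R) : R := normal_pdf 0 1 z.

Definition W (y x1 x2 : R) : R := normal_pdf (x1 + x2) 1 y.

Definition QY (S1 S2 rho : R) (y x2 : R) : R :=
  normal_pdf (x2 * (1 + rho * sqrt (S1 / S2))) (1 + S1 * (1 - rho ^ 2)) y.

Definition j1 (S1 S2 rho : R) (x1 x2 y : R) : R :=
  ln (W y x1 x2 / QY S1 S2 rho y x2).

Definition improper_int (g : R -> R) (l : R) : Prop :=
  exists pr : (forall a b, Riemann_integrable g a b),
    forall eps, eps > 0 -> exists M, forall a b, a <= - M -> M <= b ->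
      Rabs (RiemannInt (pr a b) - l) < eps.

(* E[f(Z)] for Z ~ N(0,1) (0 if the integral does not exist) *)
Definition gauss_E (f : R -> R) : R :=
  match excluded_middle_informative
          (exists l, improper_int (fun z => f z * std_normal_pdf z) l) with
  | left H => proj1_sig (constructive_indefinite_description _ H)
  | right _ => 0
  end.

Definition T1 (S1 S2 rho : R) (n : nat) (x1 x2 : nat -> R) : R :=
  rsum n (fun i =>
    let J := fun z => j1 S1 S2 rho (x1 i) (x2 i) (x1 i + x2 i + z) in
    let mu := gauss_E J in
    gauss_E (fun z => Rabs (/ sqrt (INR n) * (J z - mu)) ^ 3)).

(* Take x2 constant equal to sqrt S2 and
     x1_i = sqrt S1 * (p + sqrt (1 - p^2) * w_i),   p = rhot_n,
   where w is a balanced +/- pattern with sum 0, sum of squares n and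
   w_i^2 <= 2; this meets the power and correlation constraints exactly.
   Along the channel, y = x1 + x2 + z, the density j1 is an explicit quadratic
   in z whose growth coefficient S1 (1 - rho^2) + |b| + b^2 (b the offset of
   the noise mean under Q_{Y|X2}) is O(sqrt (1 - p)) uniformly in i, because
   1 - rho_n <= (1 - p) / c1.  A function bounded by E (1 + z^2) has third
   absolute central Gaussian moment O(E^3); summing n such terms scaled by
   n^(-3/2) gives O((1 - p)^(3/2) / sqrt n), which is O((1 - p) / sqrt n). *)

From Coquelicot Require Import Coquelicot.
From Stdlib Require Import Reals Lra Psatz Lia ClassicalEpsilon.
Open Scope R_scope.

(* A Riemann integral of a function dominated by K/(1+z^2) is at most K*pi in
   absolute value, uniformly in the interval: compare with K*atan. *)
Lemma RInt_le_arctan_mass (K a b : R) (g : R -> R) (pr : Riemann_integrable g a b) :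
  0 <= K -> a <= b -> (forall z, Rabs (g z) <= K * / (1 + z ^ 2)) ->
  Rabs (RiemannInt pr) <= K * PI.
Proof.
  intros HK Hab Hg.
  set (h := fun z => K * / (1 + z ^ 2)).
  assert (Hh : is_RInt h a b (K * atan b - K * atan a)).
  { apply (is_RInt_derive (fun z => K * atan z) h).
    - intros x _. apply is_derive_Reals, derivable_pt_lim_scal, derivable_pt_lim_atan.
    - intros x _. apply (ex_derive_continuous (V := R_CompleteNormedModule)).
      unfold h. auto_derive. nra. }
  assert (Eg : ex_RInt g a b) by (apply ex_RInt_Reals_1; exact pr).
  assert (Eh : ex_RInt h a b) by (eexists; exact Hh).
  assert (Eh' : ex_RInt (fun z => - h z) a b)
    by exact (ex_RInt_opp (V := R_CompleteNormedModule) h a b Eh).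
  assert (Hup : RInt g a b <= RInt h a b).
  { apply RInt_le; auto. intros x _. specialize (Hg x).
    apply Rabs_le_between in Hg. unfold h; lra. }
  assert (Hlow : RInt (fun z => - h z) a b <= RInt g a b).
  { apply RInt_le; auto. intros x _. specialize (Hg x).
    apply Rabs_le_between in Hg. unfold h; lra. }
  rewrite (RInt_opp (V := R_CompleteNormedModule) h) in Hlow by exact Eh.
  rewrite (is_RInt_unique _ _ _ _ Hh) in Hup, Hlow.
  rewrite <- RInt_Reals. pose proof (atan_bound a). pose proof (atan_bound b).
  apply Rabs_le_between. unfold opp in Hlow; simpl in Hlow. split; nra.
Qed.

(* The same bound for the Gaussian expectation: it holds for the improper
   integral when it exists, and trivially for the default value 0 otherwise. *)
Lemma gauss_E_abs_le (f : R -> R) (K : R) : 0 <= K ->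
  (forall z, Rabs (f z * std_normal_pdf z) <= K * / (1 + z ^ 2)) ->
  Rabs (gauss_E f) <= K * PI.
Proof.
  intros HK Hf. pose proof PI_RGT_0. unfold gauss_E.
  destruct excluded_middle_informative as [Hex | _].
  2:{ rewrite Rabs_R0. nra. }
  destruct (constructive_indefinite_description _ Hex) as [l [pr Hl]]; simpl.
  apply Rle_plus_epsilon. intros eps Heps.
  destruct (Hl eps Heps) as [M HM].
  pose proof (Rle_abs M). pose proof (Rabs_pos M).
  specialize (HM (- Rabs M) (Rabs M) ltac:(lra) ltac:(lra)).
  pose proof (RInt_le_arctan_mass K _ _ _ (pr (- Rabs M) (Rabs M)) HK ltac:(lra) Hf).
  pose proof (Rabs_triang_inv l (RiemannInt (pr (- Rabs M) (Rabs M)))).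
  rewrite Rabs_minus_sym in HM. lra.
Qed.

Lemma std_normal_pdf_pos (z : R) : 0 < std_normal_pdf z.
Proof.
  unfold std_normal_pdf, normal_pdf. apply Rmult_lt_0_compat.
  - apply Rinv_0_lt_compat, sqrt_lt_R0. pose proof PI_RGT_0; lra.
  - apply exp_pos.
Qed.

(* Polynomial versus Gaussian decay, via exp x >= 1 + x at x = z^2/8. *)
Lemma one_plus_sq_le_exp (z : R) : 1 + z ^ 2 <= 8 * exp (z ^ 2 / 8).
Proof. pose proof (exp_ineq1_le (z ^ 2 / 8)). nra. Qed.

Lemma std_normal_pdf_decay (z : R) : (1 + z ^ 2) ^ 4 * std_normal_pdf z <= 4096.
Proof.
  unfold std_normal_pdf, normal_pdf.
  set (c := / sqrt (2 * PI * 1)).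
  assert (Hc : 0 < c <= 1).
  { assert (Hs : 1 <= sqrt (2 * PI * 1)).
    { rewrite <- sqrt_1 at 1. apply sqrt_le_1_alt. pose proof PI2_1. lra. }
    split; [apply Rinv_0_lt_compat; lra|].
    rewrite <- Rinv_1. apply Rinv_le_contravar; lra. }
  set (e := exp (z ^ 2 / 8)).
  assert (He : 0 < e) by apply exp_pos.
  assert (Hexp : exp (- (z - 0) ^ 2 / (2 * 1)) = / e ^ 4).
  { replace (- (z - 0) ^ 2 / (2 * 1))
      with (- (z ^ 2 / 8 + z ^ 2 / 8 + z ^ 2 / 8 + z ^ 2 / 8)) by field.
    rewrite exp_Ropp, !exp_plus. fold e. f_equal. ring. }
  assert (Hpoly : (1 + z ^ 2) ^ 4 <= 4096 * e ^ 4).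
  { replace (4096 * e ^ 4) with ((8 * e) ^ 4) by ring.
    apply pow_incr. pose proof (one_plus_sq_le_exp z) as Hz. fold e in Hz. split; nra. }
  rewrite Hexp.
  assert (He4 : 0 < e ^ 4) by (apply pow_lt; lra).
  replace ((1 + z ^ 2) ^ 4 * (c * / e ^ 4)) with (c * ((1 + z ^ 2) ^ 4 / e ^ 4)) by (field; lra).
  assert (Hq : (1 + z ^ 2) ^ 4 / e ^ 4 <= 4096).
  { apply Rmult_le_reg_r with (e ^ 4); [lra|]. unfold Rdiv.
    rewrite Rmult_assoc, Rinv_l by lra. lra. }
  assert (0 <= (1 + z ^ 2) ^ 4 / e ^ 4).
  { apply Rdiv_le_0_compat; [apply pow_le; nra | lra]. }
  nra.
Qed.

Lemma gauss_E_cubic_growth (f : R -> R) (K : R) : 0 <= K ->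
  (forall z, Rabs (f z) <= K * (1 + z ^ 2) ^ 3) ->
  Rabs (gauss_E f) <= 4096 * PI * K.
Proof.
  intros HK Hf. replace (4096 * PI * K) with ((4096 * K) * PI) by ring.
  apply gauss_E_abs_le; [lra|]. intros z.
  assert (Hz : 0 < 1 + z ^ 2) by nra.
  pose proof (std_normal_pdf_pos z). pose proof (std_normal_pdf_decay z).
  rewrite Rabs_mult, (Rabs_right (std_normal_pdf z)) by lra.
  apply Rmult_le_reg_r with (1 + z ^ 2); [lra|].
  replace (4096 * K * / (1 + z ^ 2) * (1 + z ^ 2)) with (4096 * K) by (field; lra).
  apply Rle_trans with (K * ((1 + z ^ 2) ^ 4 * std_normal_pdf z)); [|nra].
  replace (K * ((1 + z ^ 2) ^ 4 * std_normal_pdf z))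
    with (K * (1 + z ^ 2) ^ 3 * std_normal_pdf z * (1 + z ^ 2)) by ring.
  apply Rmult_le_compat_r; [lra|]. apply Rmult_le_compat_r; [lra|]. apply Hf.
Qed.

Definition cube_const : R := 4096 * PI * (1 + 4096 * PI) ^ 3.

Lemma gauss_E_central_cube_le (J : R -> R) (E a : R) : 0 <= E -> 0 <= a ->
  (forall z, Rabs (J z) <= E * (1 + z ^ 2)) ->
  gauss_E (fun z => Rabs (a * (J z - gauss_E J)) ^ 3) <= cube_const * a ^ 3 * E ^ 3.
Proof.
  intros HE Ha HJ. pose proof PI_RGT_0.
  assert (Hmean : Rabs (gauss_E J) <= 4096 * PI * E).
  { apply gauss_E_cubic_growth; [lra|]. intros z.
    assert (1 + z ^ 2 <= (1 + z ^ 2) ^ 3)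
      by (rewrite <- (pow_1 (1 + z ^ 2)) at 1; apply Rle_pow; [nra | lia]).
    specialize (HJ z). nra. }
  set (F := E * (1 + 4096 * PI)).
  assert (HF : 0 <= F) by (unfold F; nra).
  assert (Hcent : forall z, Rabs (J z - gauss_E J) <= F * (1 + z ^ 2)).
  { intros z. specialize (HJ z). pose proof (Rabs_triang (J z) (- gauss_E J)).
    rewrite Rabs_Ropp in *.
    assert (0 <= 4096 * PI * E * z ^ 2) by (apply Rmult_le_pos; [nra | apply pow2_ge_0]).
    unfold Rminus, F. nra. }
  eapply Rle_trans; [apply Rle_abs|].
  replace (cube_const * a ^ 3 * E ^ 3) with (4096 * PI * (a ^ 3 * F ^ 3))
    by (unfold cube_const, F; ring).
  apply gauss_E_cubic_growth; [apply Rmult_le_pos; apply pow_le; lra|].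
  intros z. rewrite <- RPow_abs, Rabs_Rabsolu, Rabs_mult, (Rabs_right a) by lra.
  replace (a ^ 3 * F ^ 3 * (1 + z ^ 2) ^ 3) with ((a * (F * (1 + z ^ 2))) ^ 3) by ring.
  apply pow_incr. split; [apply Rmult_le_pos; [lra | apply Rabs_pos]|].
  apply Rmult_le_compat_l; auto.
Qed.

Lemma ln_sqrt_half (x : R) : 0 < x -> ln (sqrt x) = ln x / 2.
Proof.
  intros Hx. rewrite <- (sqrt_sqrt x) at 2 by lra.
  rewrite ln_mult by (apply sqrt_lt_R0; lra). field.
Qed.

Lemma ln_gauss_form (s t : R) : 0 < s -> ln (/ s * exp t) = t - ln s.
Proof.
  intros Hs. rewrite ln_mult, ln_Rinv, ln_exp by (try apply Rinv_0_lt_compat; try apply exp_pos; lra).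
  ring.
Qed.

Lemma j1_along_channel (S1 S2 rho x1 x2 z : R) : S1 > 0 -> -1 <= rho <= 1 ->
  let v := 1 + S1 * (1 - rho ^ 2) in
  j1 S1 S2 rho x1 x2 (x1 + x2 + z) =
  ln v / 2 - z ^ 2 / 2 + (x1 - x2 * rho * sqrt (S1 / S2) + z) ^ 2 / (2 * v).
Proof.
  intros HS Hr v. unfold j1, W, QY, normal_pdf. fold v.
  assert (Hv : 1 <= v) by (assert (rho ^ 2 <= 1) by nra; unfold v; nra).
  pose proof PI_RGT_0.
  assert (P1 : 0 < sqrt (2 * PI * 1)) by (apply sqrt_lt_R0; lra).
  assert (P2 : 0 < sqrt (2 * PI * v)) by (apply sqrt_lt_R0; nra).
  rewrite ln_div by (apply Rmult_lt_0_compat; [apply Rinv_0_lt_compat; lra | apply exp_pos]).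
  rewrite !ln_gauss_form, !ln_sqrt_half, (ln_mult (2 * PI) v) by nra.
  replace (2 * PI * 1) with (2 * PI) by ring. field. lra.
Qed.

Lemma ln_between (v : R) : 1 <= v -> 0 <= ln v <= v - 1.
Proof.
  intros Hv. split.
  - rewrite <- ln_1. apply ln_le; lra.
  - rewrite <- (ln_exp (v - 1)). apply ln_le; [lra|].
    pose proof (exp_ineq1_le (v - 1)). lra.
Qed.

Lemma quadratic_form_growth (L v b z : R) : 1 <= v -> 0 <= L <= v - 1 ->
  Rabs (L / 2 - z ^ 2 / 2 + (b + z) ^ 2 / (2 * v)) <= (v - 1 + Rabs b + b ^ 2) * (1 + z ^ 2).
Proof.
  intros Hv HL.
  set (w := / v).
  assert (Hw : 0 < w <= 1).
  { split; [apply Rinv_0_lt_compat; lra|]. rewrite <- Rinv_1. apply Rinv_le_contravar; lra. }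
  replace ((b + z) ^ 2 / (2 * v)) with (w * (b + z) ^ 2 / 2) by (unfold w; field; lra).
  assert (Hwv : w * v = 1) by (unfold w; field; lra).
  assert (H1w : 1 - w <= v - 1) by (assert (0 <= (v - 1) * (1 - w)) by nra; nra).
  pose proof (Rabs_pos b). pose proof (Rabs_pos z).
  assert (Hbz : Rabs (b * z) <= Rabs b * (1 + z ^ 2)).
  { rewrite Rabs_mult. apply Rmult_le_compat_l; [lra|].
    apply Rabs_le; split; nra. }
  apply Rabs_le_between in Hbz.
  assert (0 <= (v - 1 - (1 - w)) * z ^ 2) by (apply Rmult_le_pos; nra).
  assert (w * b ^ 2 <= b ^ 2 * (1 + z ^ 2)) by nra.
  assert (- (Rabs b * (1 + z ^ 2)) <= w * (b * z) <= Rabs b * (1 + z ^ 2)) by (split; nra).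
  apply Rabs_le_between. split; nra.
Qed.

Lemma j1_growth (S1 S2 rho x1 x2 z : R) : S1 > 0 -> -1 <= rho <= 1 ->
  let b := x1 - x2 * rho * sqrt (S1 / S2) in
  Rabs (j1 S1 S2 rho x1 x2 (x1 + x2 + z))
    <= (S1 * (1 - rho ^ 2) + Rabs b + b ^ 2) * (1 + z ^ 2).
Proof.
  intros HS Hr b. rewrite j1_along_channel by auto.
  set (v := 1 + S1 * (1 - rho ^ 2)).
  replace (S1 * (1 - rho ^ 2)) with (v - 1) by (unfold v; ring).
  assert (Hv : 1 <= v) by (assert (rho ^ 2 <= 1) by nra; unfold v; nra).
  apply quadratic_form_growth; auto. apply ln_between; auto.
Qed.

Lemma rsum_ext (n : nat) (f g : nat -> R) :
  (forall i, (i < n)%nat -> f i = g i) -> rsum n f = rsum n g.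
Proof.
  induction n as [|n IH]; intros H; simpl; auto.
  rewrite IH by (intros; apply H; lia). rewrite H by lia. reflexivity.
Qed.

Lemma rsum_le_const (n : nat) (f : nat -> R) (c : R) :
  (forall i, (i < n)%nat -> f i <= c) -> rsum n f <= INR n * c.
Proof.
  induction n as [|n IH]; intros H; cbn [rsum]; [simpl; lra|].
  rewrite S_INR. assert (rsum n f <= INR n * c) by (apply IH; intros; apply H; lia).
  assert (f n <= c) by (apply H; lia). lra.
Qed.

Lemma rsum_const (n : nat) (c : R) : rsum n (fun _ => c) = INR n * c.
Proof. induction n as [|n IH]; cbn [rsum]; [simpl; ring | rewrite IH, S_INR; ring]. Qed.

Lemma rsum_add_range (k m : nat) (f : nat -> R) :
  rsum (k + m) f = rsum k f + rsum m (fun i => f (k + i)%nat).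
Proof.
  induction m as [|m IH]; simpl; [rewrite Nat.add_0_r; ring|].
  rewrite Nat.add_succ_r. simpl. rewrite IH. ring.
Qed.

Lemma T1_le (S1 S2 rho : R) (n : nat) (x1 x2 : nat -> R) (E : R) :
  (0 < n)%nat -> 0 <= E ->
  (forall i z, (i < n)%nat ->
     Rabs (j1 S1 S2 rho (x1 i) (x2 i) (x1 i + x2 i + z)) <= E * (1 + z ^ 2)) ->
  T1 S1 S2 rho n x1 x2 <= cube_const * E ^ 3 / sqrt (INR n).
Proof.
  intros Hn HE HJ.
  assert (Hpos : 0 < INR n) by (apply lt_0_INR; lia).
  assert (Hsq : 0 < sqrt (INR n)) by (apply sqrt_lt_R0; lra).
  set (a := / sqrt (INR n)).
  assert (Ha : 0 < a) by (apply Rinv_0_lt_compat; lra).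
  apply Rle_trans with (INR n * (cube_const * a ^ 3 * E ^ 3)).
  - apply rsum_le_const. intros i Hi.
    apply gauss_E_central_cube_le; [lra | lra | intros z; apply HJ; exact Hi].
  - apply Req_le. unfold a. rewrite <- (sqrt_sqrt (INR n)) at 1 by lra.
    field. lra.
Qed.

(* A balanced pattern w in R^n with sum 0 and sum of squares n: the first
   k = floor(n/2) entries equal sqrt(m/k), the remaining m = n - k entries
   equal -sqrt(k/m). *)
Definition low_half (n : nat) : nat := Nat.div2 n.
Definition high_half (n : nat) : nat := (n - Nat.div2 n)%nat.

Definition balanced (n i : nat) : R :=
  if Nat.ltb i (low_half n)
  then sqrt (INR (high_half n) / INR (low_half n))
  else - sqrt (INR (low_half n) / INR (high_half n)).

Lemma halves_facts (n : nat) : (2 <= n)%nat ->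
  n = (low_half n + high_half n)%nat /\ 1 <= INR (low_half n) /\
  INR (low_half n) <= INR (high_half n) <= 2 * INR (low_half n).
Proof.
  intros Hn. unfold low_half, high_half.
  pose proof (Nat.div2_odd n) as Hd.
  assert (H1 : (1 <= Nat.div2 n)%nat) by (destruct (Nat.odd n); simpl in Hd; lia).
  assert (H2 : (Nat.div2 n <= n - Nat.div2 n)%nat) by (destruct (Nat.odd n); simpl in Hd; lia).
  assert (H3 : (n - Nat.div2 n <= 2 * Nat.div2 n)%nat) by (destruct (Nat.odd n); simpl in Hd; lia).
  split; [lia|]. split; [apply (le_INR 1); auto|]. split; [apply le_INR; auto|].
  replace 2 with (INR 2) by (simpl; lra). rewrite <- mult_INR. apply le_INR; auto.
Qed.

Lemma rsum_quadratic_balanced (n : nat) (F : R -> R) (c0 c1 c2 : R) :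
  (2 <= n)%nat -> (forall w, F w = c0 + c1 * w + c2 * w ^ 2) ->
  rsum n (fun i => F (balanced n i)) = INR n * (c0 + c2).
Proof.
  intros Hn HF. destruct (halves_facts n Hn) as (Hsplit & Hk & Hkm & Hm).
  set (k := low_half n) in *. set (m := high_half n) in *.
  set (s := sqrt (INR m / INR k)). set (t := - sqrt (INR k / INR m)).
  assert (Hs2 : s ^ 2 = INR m / INR k) by (apply pow2_sqrt, Rdiv_le_0_compat; lra).
  assert (Ht2 : t ^ 2 = INR k / INR m)
    by (unfold t; rewrite <- Rsqr_pow2, <- Rsqr_neg, Rsqr_pow2; apply pow2_sqrt, Rdiv_le_0_compat; lra).
  assert (Hsum : INR k * s + INR m * t = 0).
  { assert (Hsq : (INR k * s) ^ 2 = (INR m * t) ^ 2) by (rewrite !Rpow_mult_distr, Hs2, Ht2; field; lra).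
    assert (0 <= INR k * s) by (apply Rmult_le_pos; [lra | apply sqrt_pos]).
    assert (INR m * t <= 0) by (unfold t; pose proof (sqrt_pos (INR k / INR m)); nra).
    nra. }
  rewrite Hsplit at 1. rewrite rsum_add_range.
  rewrite (rsum_ext k _ (fun _ => F s)), (rsum_ext m _ (fun _ => F t)), !rsum_const.
  - rewrite !HF, Hsplit, plus_INR.
    replace (INR k * (c0 + c1 * s + c2 * s ^ 2) + INR m * (c0 + c1 * t + c2 * t ^ 2))
      with ((INR k + INR m) * c0 + c1 * (INR k * s + INR m * t) + c2 * (INR k * s ^ 2 + INR m * t ^ 2))
      by ring.
    rewrite Hsum, Hs2, Ht2. field. lra.
  - intros i _. unfold balanced. fold k. destruct (Nat.ltb_spec (k + i) k); [lia | reflexivity].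
  - intros i Hi. unfold balanced. fold k. destruct (Nat.ltb_spec i k); [reflexivity | lia].
Qed.

Lemma balanced_sq_le (n i : nat) : (2 <= n)%nat -> balanced n i ^ 2 <= 2.
Proof.
  intros Hn. destruct (halves_facts n Hn) as (_ & Hk & Hkm & Hm).
  unfold balanced. destruct (Nat.ltb i (low_half n)).
  - rewrite pow2_sqrt by (apply Rdiv_le_0_compat; lra).
    apply Rmult_le_reg_r with (INR (low_half n)); [lra|]. unfold Rdiv.
    rewrite Rmult_assoc, Rinv_l by lra. lra.
  - rewrite <- Rsqr_pow2, <- Rsqr_neg, Rsqr_pow2, pow2_sqrt by (apply Rdiv_le_0_compat; lra).
    apply Rmult_le_reg_r with (INR (high_half n)); [lra|]. unfold Rdiv.
    rewrite Rmult_assoc, Rinv_l by lra. lra.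
Qed.

Definition x1_vec (S1 p : R) (n i : nat) : R := sqrt S1 * (p + sqrt (1 - p ^ 2) * balanced n i).
Definition x2_vec (S2 : R) (i : nat) : R := sqrt S2.

Lemma vectors_meet_constraints (n : nat) (S1 S2 p : R) :
  (2 <= n)%nat -> S1 > 0 -> S2 > 0 -> -1 <= p <= 1 ->
  inner n (x1_vec S1 p n) (x1_vec S1 p n) = INR n * S1 /\
  inner n (x2_vec S2) (x2_vec S2) = INR n * S2 /\
  inner n (x1_vec S1 p n) (x2_vec S2) / (norm2 n (x1_vec S1 p n) * norm2 n (x2_vec S2)) = p.
Proof.
  intros Hn HS1 HS2 Hp.
  set (sig := sqrt (1 - p ^ 2)).
  assert (Hsig : sig ^ 2 = 1 - p ^ 2) by (apply pow2_sqrt; nra).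
  assert (HS1s : sqrt S1 ^ 2 = S1) by (apply pow2_sqrt; lra).
  assert (I1 : inner n (x1_vec S1 p n) (x1_vec S1 p n) = INR n * S1).
  { unfold inner, x1_vec. fold sig.
    rewrite (rsum_quadratic_balanced n (fun w => sqrt S1 * (p + sig * w) * (sqrt S1 * (p + sig * w)))
      (sqrt S1 ^ 2 * p ^ 2) (2 * sqrt S1 ^ 2 * p * sig) (sqrt S1 ^ 2 * sig ^ 2))
      by (auto; intros w; ring).
    rewrite Hsig, HS1s. ring. }
  assert (I2 : inner n (x2_vec S2) (x2_vec S2) = INR n * S2).
  { unfold inner, x2_vec. rewrite rsum_const, sqrt_sqrt by lra. ring. }
  assert (I3 : inner n (x1_vec S1 p n) (x2_vec S2) = INR n * (sqrt S1 * sqrt S2 * p)).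
  { unfold inner, x1_vec, x2_vec.
    rewrite (rsum_quadratic_balanced n (fun w => sqrt S1 * (p + sqrt (1 - p ^ 2) * w) * sqrt S2)
      (sqrt S1 * sqrt S2 * p) (sqrt S1 * sqrt S2 * sqrt (1 - p ^ 2)) 0) by (auto; intros w; ring).
    ring. }
  split; [exact I1|]. split; [exact I2|].
  unfold norm2. rewrite I1, I2, I3.
  assert (Hn0 : 0 < INR n) by (apply lt_0_INR; lia).
  rewrite !sqrt_mult by lra.
  assert (0 < sqrt (INR n)) by (apply sqrt_lt_R0; lra).
  assert (0 < sqrt S1) by (apply sqrt_lt_R0; lra).
  assert (0 < sqrt S2) by (apply sqrt_lt_R0; lra).
  replace (sqrt (INR n) * sqrt S1 * (sqrt (INR n) * sqrt S2))
    with (sqrt (INR n) * sqrt (INR n) * (sqrt S1 * sqrt S2)) by ring.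
  rewrite sqrt_sqrt by lra. field. lra.
Qed.

Lemma vectors_offset (S1 S2 p r : R) (n i : nat) : S1 > 0 -> S2 > 0 ->
  x1_vec S1 p n i - x2_vec S2 i * r * sqrt (S1 / S2)
  = sqrt S1 * (p - r + sqrt (1 - p ^ 2) * balanced n i).
Proof.
  intros HS1 HS2. unfold x1_vec, x2_vec.
  replace (sqrt S2 * r * sqrt (S1 / S2)) with (r * (sqrt S2 * sqrt (S1 / S2))) by ring.
  rewrite <- sqrt_mult by (try apply Rlt_le, Rdiv_lt_0_compat; lra).
  replace (S2 * (S1 / S2)) with S1 by (field; lra). ring.
Qed.

Lemma le_sqrt2_mul_sqrt (d : R) : 0 <= d <= 2 -> d <= sqrt 2 * sqrt d.
Proof.
  intros Hd. rewrite <- (sqrt_sqrt d) at 1 by lra.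
  apply Rmult_le_compat_r; [apply sqrt_pos | apply sqrt_le_1_alt; lra].
Qed.

Lemma sqrt_one_minus_sq_le (p : R) : -1 <= p <= 1 -> sqrt (1 - p ^ 2) <= sqrt 2 * sqrt (1 - p).
Proof.
  intros Hp. rewrite <- sqrt_mult by lra. apply sqrt_le_1_alt. nra.
Qed.

Lemma growth_coefficient_le (S1 c1 : R) : S1 > 0 -> c1 > 0 ->
  exists D, D > 0 /\ forall r p w,
    -1 <= r <= 1 -> -1 <= p <= 1 -> c1 * (1 - r) <= 1 - p -> w ^ 2 <= 2 ->
    let b := sqrt S1 * (p - r + sqrt (1 - p ^ 2) * w) in
    S1 * (1 - r ^ 2) + Rabs b + b ^ 2 <= D * sqrt (1 - p).
Proof.
  intros HS Hc. set (q := sqrt 2).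
  assert (Hq : 0 < q) by (apply sqrt_lt_R0; lra).
  assert (Hq2 : q * q = 2) by (apply sqrt_sqrt; lra).
  assert (Hic : 0 < / c1) by (apply Rinv_0_lt_compat; lra).
  assert (HsS : 0 < sqrt S1) by (apply sqrt_lt_R0; lra).
  set (A := 2 * S1 * q * / c1).
  set (B := sqrt S1 * ((1 + / c1) * q + 2)).
  assert (HA : 0 < A) by (unfold A; repeat apply Rmult_lt_0_compat; lra).
  assert (HB : 0 < B) by (unfold B; apply Rmult_lt_0_compat; nra).
  exists (A + B + q * B ^ 2). split; [nra|].
  intros r p w Hr Hp Hcr Hw b.
  set (u := sqrt (1 - p)).
  assert (Hu : 0 <= u) by apply sqrt_pos.
  assert (Hlin : 1 - p <= q * u) by (apply le_sqrt2_mul_sqrt; lra).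
  assert (Huq : u <= q) by (apply sqrt_le_1_alt; lra).
  assert (Hr1 : 1 - r <= / c1 * (1 - p))
    by (apply Rmult_le_reg_l with c1; [lra|]; rewrite <- Rmult_assoc, Rinv_r, Rmult_1_l by lra; lra).
  assert (Hvar : S1 * (1 - r ^ 2) <= A * u).
  { assert (S1 * (1 - r ^ 2) <= 2 * S1 * (1 - r))
      by (assert (0 <= S1 * ((1 - r) * (1 - r))) by (apply Rmult_le_pos; nra); nra).
    assert (0 <= 2 * S1 * / c1) by (apply Rmult_le_pos; lra).
    unfold A. nra. }
  assert (Hwq : Rabs w <= q).
  { apply Rabs_le. split; nra. }
  assert (Hsigw : Rabs (sqrt (1 - p ^ 2) * w) <= 2 * u).
  { rewrite Rabs_mult, Rabs_right by (apply Rle_ge, sqrt_pos).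
    pose proof (sqrt_one_minus_sq_le p Hp) as Hsig. fold q u in Hsig.
    pose proof (sqrt_pos (1 - p ^ 2)). pose proof (Rabs_pos w). nra. }
  assert (Hdiff : Rabs (p - r) <= (1 + / c1) * q * u) by (apply Rabs_le; split; nra).
  assert (Hb : Rabs b <= B * u).
  { unfold b. rewrite Rabs_mult, (Rabs_right (sqrt S1)) by lra.
    replace (B * u) with (sqrt S1 * ((1 + / c1) * q * u + 2 * u)) by (unfold B; ring).
    apply Rmult_le_compat_l; [lra|].
    pose proof (Rabs_triang (p - r) (sqrt (1 - p ^ 2) * w)). lra. }
  assert (Hb2 : b ^ 2 <= q * B ^ 2 * u).
  { rewrite <- (pow2_abs b). pose proof (Rabs_pos b).
    assert (Rabs b ^ 2 <= (B * u) ^ 2) by (apply pow_incr; split; lra).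
    assert (0 <= B ^ 2 * (u * (q - u))) by (apply Rmult_le_pos; [nra | apply Rmult_le_pos; lra]).
    nra. }
  lra.
Qed.

Theorem lemma5 (S1 S2 : R) (rho rhot : nat -> R) :
  S1 > 0 -> S2 > 0 ->
  (forall n, -1 <= rho n <= 1) -> (forall n, -1 <= rhot n <= 1) ->
  Un_cv rho 1 -> Un_cv rhot 1 ->
  (exists c1 c2 N, c1 > 0 /\ c2 > 0 /\ forall n, (n >= N)%nat ->
      c1 * (1 - rho n) <= 1 - rhot n <= c2 * (1 - rho n)) ->
  exists C N, C > 0 /\ forall n, (n >= N)%nat ->
    exists x1 x2 : nat -> R,
      inner n x1 x1 = INR n * S1 /\
      inner n x2 x2 = INR n * S2 /\
      inner n x1 x2 / (norm2 n x1 * norm2 n x2) = rhot n /\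
      T1 S1 S2 (rho n) n x1 x2 <= C * ((1 - rhot n) / sqrt (INR n)).
Proof.
  intros HS1 HS2 Hrho Hrhot _ _ [c1 [c2 [N0 [Hc1 [_ Hc]]]]].
  destruct (growth_coefficient_le S1 c1 HS1 Hc1) as [D [HD HDb]].
  pose proof PI_RGT_0.
  assert (Hcube : 0 < cube_const) by (unfold cube_const; apply Rmult_lt_0_compat; [lra | apply pow_lt; lra]).
  assert (Hq : 0 < sqrt 2) by (apply sqrt_lt_R0; lra).
  exists (cube_const * D ^ 3 * sqrt 2), (Nat.max N0 2).
  split; [apply Rmult_lt_0_compat; [apply Rmult_lt_0_compat; [lra | apply pow_lt; lra] | lra]|].
  intros n Hn. set (p := rhot n). set (r := rho n).
  assert (Hn2 : (2 <= n)%nat) by lia.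
  assert (Hcr : c1 * (1 - r) <= 1 - p) by apply (Hc n), Nat.max_lub_l with 2%nat, Hn.
  pose proof (Hrho n) as Hr. pose proof (Hrhot n) as Hp. fold r in Hr. fold p in Hp.
  exists (x1_vec S1 p n), (x2_vec S2).
  destruct (vectors_meet_constraints n S1 S2 p Hn2 HS1 HS2 Hp) as (V1 & V2 & V3).
  split; [exact V1|]. split; [exact V2|]. split; [exact V3|].
  set (u := sqrt (1 - p)).
  assert (Hu : 0 <= u) by apply sqrt_pos.
  apply Rle_trans with (cube_const * (D * u) ^ 3 / sqrt (INR n)).
  - apply T1_le; [lia | nra |]. intros i z Hi.
    pose proof (j1_growth S1 S2 r (x1_vec S1 p n i) (x2_vec S2 i) z HS1 Hr) as Hgrowth.
    cbv zeta in Hgrowth. rewrite vectors_offset in Hgrowth by lra.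
    eapply Rle_trans; [exact Hgrowth|]. apply Rmult_le_compat_r; [nra|].
    apply HDb; auto. apply balanced_sq_le; exact Hn2.
  (* u^3 = u * (1 - p) <= sqrt 2 * (1 - p) *)
  - assert (Hu2 : u ^ 2 = 1 - p) by (apply pow2_sqrt; lra).
    assert (Huq : u <= sqrt 2) by (apply sqrt_le_1_alt; lra).
    assert (Hsn : 0 < sqrt (INR n)) by (apply sqrt_lt_R0, lt_0_INR; lia).
    unfold Rdiv. rewrite Rpow_mult_distr.
    replace (u ^ 3) with (u * (1 - p)) by (rewrite <- Hu2; ring).
    assert (0 <= cube_const * D ^ 3) by (apply Rmult_le_pos; [lra | apply pow_le; lra]).
    assert (0 <= (1 - p) * / sqrt (INR n)) by (apply Rmult_le_pos; [lra | apply Rlt_le, Rinv_0_lt_compat; lra]).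
    assert (0 <= cube_const * D ^ 3 * ((1 - p) * / sqrt (INR n))) by (apply Rmult_le_pos; lra).
    nra.
Qed.
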